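(* Let $G=(V,E)$ be a finite undirected (symmetric) graph with real edge weights, and let $P=\{S_1,\dots,S_n\}$ be a partition of $V$ with $n\ge 2$. Assume minimum spanning forests of all graphs considered here are unique. For $1\le i<j\le n$ let $G[S_i\cup S_j]$ be the subgraph of $G$ induced by $S_i\cup S_j$. Then \[\mathrm{MSF}(G)=\mathrm{MSF}\Big(\bigcup_{1\le i<j\le n}\mathrm{MSF}\big(G[S_i\cup S_j]\big)\Big),\] where the union is the graph on vertex set $V$ whose edge set is the union of the edge sets of the forests $\mathrm{MSF}(G[S_i\cup S_j])$, with edge weights inherited from $G$.
   Context: For a weighted undirected graph $H$, $\mathrm{MSF}(H)$ denotes its minimum spanning forest (a spanning forest consisting of a minimum spanning tree of each connected component of $H$, minimizing total edge weight), regarded as a set of edges. For $S\subseteq V$, $G[S]$ is the induced subgraph on $S$: vertex set $S$ and all edges of $G$ with both endpoints in $S$, with the same weights. *)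

From HB Require Import structures.
From mathcomp Require Import all_boot all_order all_algebra.
From mathcomp Require Import boolp.
From mathcomp Require Export reals.
Set Implicit Arguments. Unset Strict Implicit. Unset Printing Implicit Defensive.
Import Order.TTheory GRing.Theory Num.Theory.
Local Open Scope ring_scope.

(* Undirected simple graphs on a finite vertex type T: an edge is a
   2-element set {x, y}; a graph (for the purposes of MSF) is given by its
   edge set; weights are a function on edges. *)

Section MSF.
Variables (T : finType) (R : realType) (w : {set T} -> R).

Definition adj (F : {set {set T}}) : rel T := fun x y => [set x; y] \in F.

Definition induced (E : {set {set T}}) (S : {set T}) : {set {set T}} :=
  [set e in E | e \subset S].

Definition acyclic (F : {set {set T}}) : Prop :=
  ~ exists s : seq T, [/\ (3 <= size s)%N, uniq s & cycle (adj F) s].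

Definition spanning_forest (E F : {set {set T}}) : Prop :=
  [/\ F \subset E, acyclic F & forall x y, connect (adj F) x y = connect (adj E) x y].

Definition weight (F : {set {set T}}) : R := \sum_(e in F) w e.

Definition is_msf (E F : {set {set T}}) : Prop :=
  spanning_forest E F /\
  forall F', spanning_forest E F' -> weight F <= weight F'.

Definition unique_msf (E : {set {set T}}) : Prop :=
  forall F1 F2, is_msf E F1 -> is_msf E F2 -> F1 = F2.

Definition msf (E : {set {set T}}) : {set {set T}} :=
  odflt set0 [pick F | `[< is_msf E F >] ].

End MSF.

(* Let F = MSF(G). Because F is the unique MSF of G, exchanging an edge xy of F
   for another edge of G that reconnects the two components of F - xy strictly
   increases the weight, so xy is strictly lighter than every other edge of G
   crossing that cut. Each edge xy of F lies in some H = G[S ∪ S'] with S ≠ S'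
   blocks of P. If xy were missing from an MSF F_H of H, the path of F_H from x
   to y would cross the cut through a heavier edge, and swapping that edge for xy
   would make F_H lighter. Hence F ⊆ U ⊆ G; a minimum spanning forest of G that
   is contained in U is one of U, and uniqueness of MSF(U) gives F = MSF(U). *)

From mathcomp Require Import all_boot all_order all_algebra.
From mathcomp Require Import reals boolp.
Import Order.TTheory GRing.Theory Num.Theory.
Local Open Scope ring_scope.
Set Implicit Arguments. Unset Strict Implicit.

Section Forests.
Variable T : finType.
Implicit Types (A B E F K : {set {set T}}) (C f : {set T}).

Lemma adj_sym F : symmetric (adj F).
Proof. by move=> x y; rewrite /adj setUC. Qed.

Lemma connect_adj_sym F : connect_sym (adj F).
Proof. exact/sym_connect_sym/adj_sym. Qed.

Lemma connect_adjS A B : A \subset B -> subrel (connect (adj A)) (connect (adj B)).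
Proof. by move=> sAB; apply: connect_sub => x y Axy; apply/connect1/(subsetP sAB). Qed.

Lemma adj_setD1 F f x y : adj F x y -> [set x; y] != f -> adj (F :\ f) x y.
Proof. by rewrite /adj in_setD1 => -> ->. Qed.

Lemma connect_set2 F x y u v :
  [set x; y] = [set u; v] -> connect (adj F) u v -> connect (adj F) x y.
Proof.
move=> Exy cuv; have: x \in [set u; v] by rewrite -Exy set21.
have: y \in [set u; v] by rewrite -Exy set22.
by rewrite !inE => /orP[]/eqP-> /orP[]/eqP->; rewrite // connect_adj_sym.
Qed.

Lemma connect_setD1 F u v : connect (adj (F :\ [set u; v])) u v ->
  connect (adj (F :\ [set u; v])) =2 connect (adj F).
Proof.
move=> cuv x y; apply/idP/idP; first exact/connect_adjS/subD1set.
apply: connect_sub => {}x {}y Fxy.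
have [/connect_set2 -> // | neq] := eqVneq [set x; y] [set u; v].
exact/connect1/adj_setD1.
Qed.

Lemma connect_through_edge F x y a b : [set x; y] \in F ->
  connect (adj F) a b -> ~~ connect (adj (F :\ [set x; y])) a b ->
  (connect (adj (F :\ [set x; y])) a x && connect (adj (F :\ [set x; y])) y b) ||
  (connect (adj (F :\ [set x; y])) a y && connect (adj (F :\ [set x; y])) x b).
Proof.
set D := adj (F :\ [set x; y]) => Fxy Fab nab.
pose P : pred T := fun z =>
  connect D a z || (connect D a x || connect D a y) && (connect D x z || connect D y z).
have stepP u v : adj F u v -> u \in P -> v \in P.
  move=> Fuv; rewrite /in_mem /= /P.
  have [Euv | neq] := eqVneq [set u; v] [set x; y].
    have: u \in [set x; y] by rewrite -Euv set21.
    have: v \in [set x; y] by rewrite -Euv set22.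
    rewrite !inE => /orP[]/eqP-> /orP[]/eqP->; rewrite !connect0 /= ?orbT ?andbT;
      by case/orP=> [-> | ->]; rewrite ?orbT.
  have Duv : connect D u v := connect1 (adj_setD1 Fuv neq).
  case/orP=> [au | /andP[-> /orP[] zu]]; first by rewrite (connect_trans au Duv).
    by rewrite (connect_trans zu Duv) orbT.
  by rewrite (connect_trans zu Duv) !orbT.
have := closed_connect (intro_closed (connect_adj_sym F) stepP) Fab.
rewrite /in_mem /= /P connect0 (negPf nab) /= => /esym.
case/andP=> /orP[] az /orP[] zb; rewrite ?az ?zb ?orbT //;
  by rewrite (connect_trans az zb) in nab.
Qed.

Lemma path_setD1 F f z s : path (adj F) z s ->
  all (fun d => d \notin f) s -> path (adj (F :\ f)) z s.
Proof.
elim: s z => //= d s IHs z /andP[Fzd Fs] /andP[ndf nsf].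
rewrite IHs // andbT adj_setD1 //; apply: contraNneq ndf => <-; exact: set22.
Qed.

Lemma acyclicP F : acyclic F <->
  (forall x y, x != y -> [set x; y] \in F -> ~~ connect (adj (F :\ [set x; y])) x y).
Proof.
(* A path from x to y avoiding the edge xy closes a cycle with it; conversely the
   cycle a b c ... joins b back to a without the edge ab. *)
split=> [acF x y xy Fxy | bridges [s [s3 us cs]]].
  apply/connectP => -[p /shortenP[p' Dp' uniq_p' _] Ey]; subst y.
  apply: acF; exists (x :: p'); split=> //; last first.
    rewrite /= rcons_path (sub_path _ Dp') => [|u v]; last by rewrite /adj in_setD1 => /andP[].
    by rewrite adj_sym.
  case: p' Dp' uniq_p' xy Fxy => [|d [|d' p']] //=; first by rewrite eqxx.
  by rewrite /adj in_setD1 eqxx.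
case: s s3 us cs => [|a [|b [|c t]]] // _ us cs.
have : path (adj F) a ([:: b] ++ rcons (c :: t) a) := cs.
rewrite cat_path rcons_path => /and3P[/andP[Fab _] Fct Fla].
move: us; rewrite cons_uniq in_cons negb_or cons_uniq => /and3P[/andP[ab nact] nbct _].
move/negP: (bridges a b ab Fab); apply; rewrite connect_adj_sym.
have nabct : all (fun d => d \notin [set a; b]) (c :: t).
  apply/allP => d ct; rewrite !inE negb_or.
  by apply/andP; split; [apply: contraNneq nact | apply: contraNneq nbct] => <-.
apply: connect_trans (connect1 _).
  by apply/connectP; exists (c :: t); first exact: path_setD1 Fct nabct.
apply: adj_setD1 Fla _; apply: contraTneq (allP nabct _ (mem_last c t)) => <-.
by rewrite negbK set21.
Qed.

Lemma acyclicS A B : A \subset B -> acyclic B -> acyclic A.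
Proof.
move=> sAB acB [s [s3 us cs]]; apply: acB; exists s; split=> //.
by apply: sub_cycle cs => x y; apply: (subsetP sAB).
Qed.

Lemma acyclicU1 F u v : acyclic F -> ~~ connect (adj F) u v -> acyclic ([set u; v] |: F).
Proof.
move=> /acyclicP acF nuv; apply/acyclicP => x y xy.
set G := [set u; v] |: F; set e := [set x; y].
have sGuvF : G :\ [set u; v] \subset F.
  by apply/subsetP => g; rewrite !inE => /andP[/negPf ->].
have [Euv _ | neq] := eqVneq e [set u; v].
  by apply: contraNN nuv; rewrite Euv => /(connect_adjS sGuvF); apply: connect_set2.
rewrite in_setU1 (negPf neq) /= => Fe; apply/negP => Gxy.
have sGeuvFe : (G :\ e) :\ [set u; v] \subset F :\ e.
  by apply/subsetP => g; rewrite !inE => /and3P[/negPf nguv ->]; rewrite nguv.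
have Duv : [set u; v] \in G :\ e by rewrite in_setD1 eq_sym neq setU11.
have cF := connect_adjS (subset_trans sGeuvFe (subD1set F e)).
have Fxy : connect (adj F) x y by apply/connect1.
have Fyx : connect (adj F) y x by rewrite connect_adj_sym.
have [Dxy | nDxy] := boolP (connect (adj ((G :\ e) :\ [set u; v])) x y).
  by move: (acF x y xy Fe); rewrite (connect_adjS sGeuvFe Dxy).
move/negP: nuv; apply.
have [/andP[xu vy] | /andP[xv uy]] := orP (connect_through_edge Duv Gxy nDxy).
  rewrite connect_adj_sym in xu; rewrite connect_adj_sym in vy.
  exact: connect_trans (cF _ _ xu) (connect_trans Fxy (cF _ _ vy)).
exact: connect_trans (cF _ _ uy) (connect_trans Fyx (cF _ _ xv)).
Qed.

Lemma spanning_forest_exchange E F u v a b :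
  spanning_forest E F -> [set u; v] \in F -> [set a; b] \in E ->
  ~~ connect (adj (F :\ [set u; v])) a b ->
  spanning_forest E ([set a; b] |: (F :\ [set u; v])).
Proof.
move=> [sFE acF cF] Fuv Eab nab; set F' := _ |: _.
have sF'E : F' \subset E by rewrite subUset sub1set Eab (subset_trans (subD1set _ _) sFE).
have sDF' : F :\ [set u; v] \subset F' := subsetUr _ _.
have cD := connect_adjS sDF'.
split=> [//||x y]; first exact: acyclicU1 (acyclicS (subD1set _ _) acF) nab.
apply/idP/idP; first exact: connect_adjS.
rewrite -cF; apply: connect_sub => {}x {}y Fxy.
have [/connect_set2 -> // | neq] := eqVneq [set x; y] [set u; v]; last first.
  exact/connect1/(subsetP sDF')/adj_setD1.
have F'ab : connect (adj F') a b by apply/connect1/setU11.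
have Fab : connect (adj F) a b by rewrite cF; apply/connect1.
have [/andP[au vb] | /andP[av ub]] := orP (connect_through_edge Fuv Fab nab).
  rewrite connect_adj_sym in au; rewrite connect_adj_sym in vb.
  exact: connect_trans (cD _ _ au) (connect_trans F'ab (cD _ _ vb)).
rewrite connect_adj_sym in F'ab.
exact: connect_trans (cD _ _ ub) (connect_trans F'ab (cD _ _ av)).
Qed.

Lemma spanning_forest_exists E : exists F, spanning_forest E F.
Proof.
pose P : pred {set {set T}} := fun F => `[< connect (adj F) =2 connect (adj E) >].
have [F /minsetP[/asboolP cF minF] sFE] := minset_exists (asboolT (fun x y => erefl) : P E).
exists F; split=> //; apply/acyclicP => x y _ Fxy; apply/negP => cxy.
have PFxy : P (F :\ [set x; y]) by apply/asboolP => a b; rewrite connect_setD1.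
by move/setP/(_ [set x; y]): (minF _ PFxy (subD1set _ _)); rewrite Fxy in_setD1 eqxx.
Qed.

Definition cut_edges F C : {set {set T}} :=
  [set f in F | [exists u in C, exists v in ~: C, f == [set u; v]]].

Lemma cut_edgesP F C f :
  reflect (exists u v, [/\ f \in F, u \in C, v \notin C & f = [set u; v]])
          (f \in cut_edges F C).
Proof.
rewrite inE; apply: (iffP andP) => [[Ff /exists_inP[u Cu /exists_inP[v nCv /eqP Ef]]] |].
  by exists u, v; split; rewrite // -in_setC.
move=> [u [v [Ff Cu nCv Ef]]]; split=> //; apply/exists_inP; exists u => //.
by apply/exists_inP; exists v; rewrite ?in_setC ?Ef.
Qed.

Lemma cut_edges_disconnect F C x y :
  x \in C -> y \notin C -> ~~ connect (adj (F :\: cut_edges F C)) x y.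
Proof.
move=> Cx; apply: contraNN => /(closed_connect (intro_closed (connect_adj_sym _) _)) <- //.
move=> u v; rewrite /adj in_setD => /andP[ncut Fuv] Cu; apply: contraNT ncut => nCv.
by apply/cut_edgesP; exists u, v.
Qed.

Lemma acyclic_bridge F K x y : acyclic F -> K \subset F ->
  {in K, forall f, exists u v, f = [set u; v]} ->
  connect (adj F) x y -> ~~ connect (adj (F :\: K)) x y ->
  exists2 f, f \in K & ~~ connect (adj (F :\ f)) x y.
Proof.
move=> /acyclicP acF sKF pairK Fxy nK.
(* Take K' minimal among the subsets of K separating x from y, and uv in K': x and
   y are joined through uv once uv is put back, and no other route joins u to v. *)
pose P : pred {set {set T}} := fun K' => ~~ connect (adj (F :\: K')) x y.
have [K' /minsetP[nK' minK'] sK'K] := minset_exists (nK : P K).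
have [f K'f] : exists f, f \in K'.
  by apply/set0Pn; apply: contraNneq nK' => ->; rewrite setD0 Fxy.
have Kf := subsetP sK'K f K'f; exists f => //.
have [u [v Ef]] := pairK f Kf; subst f.
have cxy : connect (adj (F :\: (K' :\ [set u; v]))) x y.
  apply: contraT => /minK'/(_ (subD1set _ _))/setP/(_ [set u; v]).
  by rewrite K'f in_setD1 eqxx.
have Duv : [set u; v] \in F :\: (K' :\ [set u; v]).
  by rewrite !inE eqxx (subsetP sKF).
have DK' : (F :\: (K' :\ [set u; v])) :\ [set u; v] = F :\: K'.
  by apply/setP => g; rewrite !inE; case: eqVneq => // ->; rewrite K'f.
have sK'uv : F :\: K' \subset F :\ [set u; v].
  apply/subsetP => g; rewrite !inE => /andP[nK'g ->]; rewrite andbT.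
  by apply: contraNneq nK'g => ->.
have cD := connect_adjS sK'uv.
have := connect_through_edge Duv cxy; rewrite DK' => /(_ nK') xuvy.
have uv : u != v.
  apply: contraNneq nK' => Euv; subst v.
  by case/orP: xuvy => /andP[xu uy]; apply: connect_trans xu uy.
apply/negP => Dxy; move/negP: (acF u v uv (subsetP sKF _ Kf)); apply.
have [/andP[xu vy] | /andP[xv uy]] := orP xuvy.
  rewrite connect_adj_sym in xu; rewrite connect_adj_sym in vy.
  exact: connect_trans (cD _ _ xu) (connect_trans Dxy (cD _ _ vy)).
rewrite connect_adj_sym in Dxy.
exact: connect_trans (cD _ _ uy) (connect_trans Dxy (cD _ _ xv)).
Qed.
End Forests.

Lemma induced_sub (T : finType) (E : {set {set T}}) S : induced E S \subset E.
Proof. by apply/subsetP => e; rewrite inE => /andP[]. Qed.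

Lemma partition_two_blocks (T : finType) (P : {set {set T}}) V x y :
  partition P V -> (2 <= #|P|)%N -> x \in V -> y \in V ->
  exists S S', [/\ S \in P, S' \in P, S != S' & [set x; y] \subset S :|: S'].
Proof.
move=> hP hn Vx Vy.
have block z : z \in V -> exists2 S, S \in P & z \in S.
  by rewrite -(cover_partition hP) => /bigcupP.
have [Sx PSx Sxx] := block x Vx; have [Sy PSy Syy] := block y Vy.
have [eSxy | nSxy] := eqVneq Sx Sy; last first.
  exists Sx, Sy; split=> //.
  by apply/subsetP => z; rewrite !inE => /orP[]/eqP->; rewrite ?Sxx ?Syy ?orbT.
have : (0 < #|P :\ Sx|)%N by move: hn; rewrite (cardsD1 Sx) PSx.
rewrite card_gt0 => /set0Pn[S]; rewrite in_setD1 => /andP[nSSx PS].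
exists Sx, S; split=> //; first by rewrite eq_sym.
by apply/subsetP => z; rewrite !inE => /orP[]/eqP->; rewrite ?Sxx // eSxy Syy.
Qed.

Section MinimumSpanningForests.
Variables (T : finType) (R : realType) (w : {set T} -> R).
Implicit Types (E F H : {set {set T}}) (e f : {set T}).

Lemma is_msf_msf E : is_msf w E (msf w E).
Proof.
have [F0 sF0] := spanning_forest_exists E.
pose P : pred {set {set T}} := fun F => `[< spanning_forest E F >].
have [F /asboolP sF minF] := arg_minP (weight w) (asboolT sF0 : P F0).
have msfF : is_msf w E F by split=> // F' /asboolP /minF.
by rewrite /msf; case: pickP => [F' /asboolP // | /(_ F) /asboolP].
Qed.

Lemma weight_exchange F e f : e \in F -> f \notin F :\ e ->
  weight w (f |: (F :\ e)) + w e = weight w F + w f.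
Proof.
move=> Fe nf; rewrite /weight big_setU1 //= (big_setD1 e Fe) /=.
by rewrite addrAC [RHS]addrAC (addrC (w f)).
Qed.

Lemma is_msf_exchange_le E F e f : is_msf w E F -> e \in F -> f \notin F :\ e ->
  spanning_forest E (f |: (F :\ e)) -> w e <= w f.
Proof.
move=> [_ minF] Fe nf /minF; rewrite -(lerD2r (w e)) weight_exchange //.
by rewrite lerD2l.
Qed.

Lemma unique_msf_exchange_lt E F e f : unique_msf w E -> is_msf w E F ->
  e \in F -> f \notin F -> spanning_forest E (f |: (F :\ e)) -> w e < w f.
Proof.
move=> uE msfF Fe nFf sF'; have nf : f \notin F :\ e by rewrite in_setD1 (negPf nFf) andbF.
rewrite lt_neqAle (is_msf_exchange_le msfF Fe nf sF') andbT; apply/eqP => wef.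
have msfF' : is_msf w E (f |: (F :\ e)).
  split=> // F'' /msfF.2; apply: le_trans.
  by rewrite -(lerD2r (w e)) weight_exchange // wef.
by move: nFf; rewrite -(uE _ _ msfF' msfF) setU11.
Qed.

Lemma is_msf_subgraph E H F :
  is_msf w E F -> F \subset H -> H \subset E -> is_msf w H F.
Proof.
move=> [[_ acF cF] minF] sFH sHE.
have cH : connect (adj H) =2 connect (adj E).
  move=> x y; apply/idP/idP; first exact: connect_adjS.
  by rewrite -cF; apply: connect_adjS.
split=> [|F' [sF'H acF' cF']]; first by split=> // x y; rewrite cF cH.
by apply: minF; split=> [||x y]; [exact: subset_trans sHE | by [] | rewrite cF' cH].
Qed.

Lemma unique_msf_edge_subgraph E H F FH x y :
  unique_msf w E -> is_msf w E F -> H \subset E -> is_msf w H FH -> x != y ->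
  [set x; y] \in F -> [set x; y] \in H -> [set x; y] \in FH.
Proof.
move=> uE msfF sHE msfFH xy Fe He; apply: contraT => nFHe.
have [[_ acF _] _] := msfF; have [[sFHH acFH cFH] _] := msfFH.
(* C is the side of x of the cut of F defined by xy; an edge uv of FH crossing it
   can be swapped with xy both in F and in FH. *)
pose C := [set z | connect (adj (F :\ [set x; y])) x z].
have Cx : x \in C by rewrite inE connect0.
have nCy : y \notin C by rewrite inE; apply: (iffLR (acyclicP F)).
have FHxy : connect (adj FH) x y by rewrite cFH; apply: connect1.
have sKFH : cut_edges FH C \subset FH by apply/subsetP => g /cut_edgesP[u [v []]].
have pairK : {in cut_edges FH C, forall g, exists u v, g = [set u; v]}.
  by move=> g /cut_edgesP[u [v [_ _ _ ->]]]; exists u, v.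
have [f] := acyclic_bridge acFH sKFH pairK FHxy (cut_edges_disconnect FH Cx nCy).
case/cut_edgesP=> u [v [FHf Cu nCv Ef]] nFHfxy; subst f.
have nuv : ~~ connect (adj (F :\ [set x; y])) u v.
  by move: Cu nCv; rewrite !inE => Cu; apply: contraNN; apply: connect_trans.
have nFf : [set u; v] \notin F.
  apply: contraNN nuv => Ff; apply/connect1/adj_setD1 => //.
  by apply: contraNneq nFHe => <-.
have Euv : [set u; v] \in E by apply/(subsetP sHE)/(subsetP sFHH).
have lt_wef := unique_msf_exchange_lt uE msfF Fe nFf
  (spanning_forest_exchange msfF.1 Fe Euv nuv).
have nFHe' : [set x; y] \notin FH :\ [set u; v] by rewrite in_setD1 (negPf nFHe) andbF.
have := is_msf_exchange_le msfFH FHf nFHe'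
  (spanning_forest_exchange msfFH.1 FHf He nFHfxy).
by rewrite leNgt lt_wef.
Qed.

End MinimumSpanningForests.

Unset Implicit Arguments. Set Strict Implicit.

Theorem theorem1 (T : finType) (R : realType) (w : {set T} -> R)
  (V : {set T}) (E : {set {set T}}) (P : {set {set T}})
  (hE : forall e, e \in E -> e \subset V /\ #|e| = 2%N)
  (hP : partition P V) (hn : (2 <= #|P|)%N) :
  let U := \bigcup_(S in P) \bigcup_(S' in P | S != S')
             msf w (induced E (S :|: S')) in
  unique_msf w E ->
  (forall S S', S \in P -> S' \in P -> S != S' ->
     unique_msf w (induced E (S :|: S'))) ->
  unique_msf w U ->
  msf w E = msf w U.
Proof.
move=> U uE _ uU; have msfE := is_msf_msf w E; set F := msf w E in msfE *.
have sUE : U \subset E.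
  apply/bigcupsP => S _; apply/bigcupsP => S' _.
  have [[sMS _ _] _] := is_msf_msf w (induced E (S :|: S')).
  exact: subset_trans sMS (induced_sub _ _).
have sFU : F \subset U.
  apply/subsetP => e Fe; have [[sFE _ _] _] := msfE; have Ee := subsetP sFE e Fe.
  have [seV /eqP/cards2P[x [y [xy exy]]]] := hE e Ee; subst e.
  have [S [S' [PS PS' nSS' sxyS]]] :=
    partition_two_blocks hP hn (subsetP seV x (set21 x y)) (subsetP seV y (set22 x y)).
  apply/bigcupP; exists S => //; apply/bigcupP; exists S'; first by rewrite PS' nSS'.
  apply: unique_msf_edge_subgraph uE msfE (induced_sub _ _) (is_msf_msf _ _) xy Fe _.
  by rewrite inE Ee.
exact: uU (is_msf_subgraph msfE sFU sUE) (is_msf_msf w U).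
Qed.
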